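(* Let $0<\alpha<1$ and $\gamma>0$. Consider the heterogeneous Galton–Watson process $\{Z_t\}_{t\ge 0}$ with $Z_0=1$, in which each individual of generation $t$ independently has either $2$ offspring, with probability $\alpha/(1+t)^{\gamma}$, or $0$ offspring, with probability $1-\alpha/(1+t)^{\gamma}$. Let $T_{ex}=\min\{t: Z_t=0\}$ be the extinction time. Then there exists a constant $C_0>0$, depending only on $\alpha$ and $\gamma$, such that for every integer $t\ge 1$, $$\mathbb{P}(T_{ex}>t) < C_0\left(\frac{t^{\gamma}}{2\alpha\, e^{\gamma}}\right)^{-t}.$$
   Context: This Galton–Watson process models the tree-generating prior of Bayesian CART/BART. In that prior, a node at depth $t$ of a binary tree is split into two children with probability $\alpha/(1+t)^\gamma$, and the root has depth $0$. The variable $Z_t$ is the number of nodes at depth $t$. *)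

From Stdlib Require Import Reals Lra Lia Arith.
Open Scope R_scope.
Local Open Scope bool_scope.

Definition split_prob (alpha gamma : R) (t : nat) : R :=
  alpha / Rpower (1 + INR t) gamma.

(* One-step transition kernel of the Galton-Watson chain from generation t
   to t+1: from n individuals, each independently has 2 children with
   probability p = split_prob t, else 0.  So Z_{t+1} = 2 * Bin(n, p):
   P(Z_{t+1} = k | Z_t = n) = C(n, k/2) p^(k/2) (1-p)^(n-k/2) if k even and
   k/2 <= n, and 0 otherwise. *)
Definition trans (alpha gamma : R) (t n k : nat) : R :=
  let p := split_prob alpha gamma t in
  if andb (Nat.even k) (Nat.div2 k <=? n)%nat then
    C n (Nat.div2 k) * p ^ (Nat.div2 k) * (1 - p) ^ (n - Nat.div2 k)
  else 0.

(* alive t k = P(Z_t = k and Z_s <> 0 for all s <= t), with Z_0 = 1.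
   Since Z_t <= 2^t, the sum over states n ranges over 0..2^t. *)
Fixpoint alive (alpha gamma : R) (t k : nat) : R :=
  match t with
  | O => if Nat.eqb k 1 then 1 else 0
  | S s =>
      if Nat.eqb k 0 then 0
      else sum_f_R0 (fun n => alive alpha gamma s n * trans alpha gamma s n k)
                    (2 ^ s)
  end.

(* P(T_ex > t) = P(Z_s <> 0 for all s = 0..t) = sum_{k>=1} alive t k
   (alive t 0 = 0 and Z_t <= 2^t). *)
Definition surv_prob (alpha gamma : R) (t : nat) : R :=
  sum_f_R0 (fun k => alive alpha gamma t k) (2 ^ t).

(* The survival event {T_ex > t} is {Z_t >= 1}, so by Markov's inequality its
   probability is at most E[Z_t].  Given Z_s, the next generation is twice a
   binomial, so E[Z_{s+1}] = 2 (alpha / (1+s)^gamma) E[Z_s], whence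
   E[Z_t] = (2 alpha)^t / (t!)^gamma.  The elementary bound t! >= (t/e)^t
   turns this into ((t^gamma) / (2 alpha e^gamma))^(-t). *)

From Stdlib Require Import Reals Lra Lia Factorial.
Open Scope R_scope.

Lemma sum_f_R0_swap (f : nat -> nat -> R) K N :
  sum_f_R0 (fun k => sum_f_R0 (fun n => f k n) N) K =
  sum_f_R0 (fun n => sum_f_R0 (fun k => f k n) K) N.
Proof.
  induction K as [|K IH]; [reflexivity|].
  rewrite tech5, IH, <- sum_plus. apply sum_eq. intros n _. now rewrite tech5.
Qed.

Lemma sum_f_R0_pairs f m :
  sum_f_R0 f (S (2 * m)) = sum_f_R0 (fun j => f (2 * j)%nat + f (S (2 * j))) m.
Proof.
  induction m as [|m IH]; [simpl; ring|].
  replace (S (2 * S m)) with (S (S (S (2 * m)))) by lia.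
  rewrite tech5, tech5, IH. replace (S (S (2 * m))) with (2 * S m)%nat by lia.
  rewrite tech5. replace (S (2 * S m)) with (S (S (S (2 * m)))) by lia. ring.
Qed.

Lemma sum_f_R0_trunc f n m : (n <= m)%nat -> (forall j, (n < j)%nat -> f j = 0) ->
  sum_f_R0 f m = sum_f_R0 f n.
Proof.
  intros Hnm Hf. induction Hnm as [|m Hnm IH]; [reflexivity|].
  rewrite tech5, IH, Hf by lia. ring.
Qed.

Lemma C_pos n k : 0 < C n k.
Proof.
  unfold C. apply Rdiv_lt_0_compat; [apply INR_fact_lt_0|].
  apply Rmult_lt_0_compat; apply INR_fact_lt_0.
Qed.

Lemma C_succ_succ m i : (i <= m)%nat ->
  INR (S i) * C (S m) (S i) = INR (S m) * C m i.
Proof.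
  intro Him. unfold C. replace (S m - S i)%nat with (m - i)%nat by lia.
  rewrite !fact_simpl, !mult_INR.
  pose proof (INR_fact_lt_0 i). pose proof (INR_fact_lt_0 m).
  pose proof (INR_fact_lt_0 (m - i)). pose proof (pos_INR i).
  rewrite S_INR. field. repeat split; lra.
Qed.

Lemma binomial_mean n p :
  sum_f_R0 (fun j => INR j * (C n j * p ^ j * (1 - p) ^ (n - j))) n = INR n * p.
Proof.
  destruct n as [|m]; [simpl; ring|].
  rewrite decomp_sum by lia. simpl pred.
  rewrite (sum_eq _ (fun i => C m i * p ^ i * (1 - p) ^ (m - i) * (INR (S m) * p))).
  - rewrite <- scal_sum, <- binomial.
    replace (p + (1 - p)) with 1 by ring. rewrite pow1. simpl. ring.
  - intros i Hi. replace (S m - S i)%nat with (m - i)%nat by lia.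
    rewrite <- !Rmult_assoc, C_succ_succ by exact Hi. simpl. ring.
Qed.

Section Process.

Variables alpha gamma : R.
Hypothesis Halpha : 0 < alpha < 1.
Hypothesis Hgamma : 0 < gamma.

Let p s := split_prob alpha gamma s.

Lemma split_prob_bounds s : 0 < p s < 1.
Proof.
  unfold p, split_prob.
  assert (Hpow : 1 <= Rpower (1 + INR s) gamma).
  { pose proof (pos_INR s).
    pose proof (Rle_Rpower (1 + INR s) 0 gamma ltac:(lra) ltac:(lra)) as Hle.
    now rewrite Rpower_O in Hle by lra. }
  split; [apply Rdiv_lt_0_compat; lra|].
  apply (Rmult_lt_reg_r (Rpower (1 + INR s) gamma)); [lra|].
  unfold Rdiv. rewrite Rmult_assoc, Rinv_l by lra. lra.
Qed.

Lemma trans_ge0 s n k : 0 <= trans alpha gamma s n k.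
Proof.
  pose proof (split_prob_bounds s). unfold p in *. unfold trans.
  destruct (_ && _)%bool; [|lra].
  apply Rmult_le_pos; [apply Rmult_le_pos|]; try apply pow_le; try lra.
  left; apply C_pos.
Qed.

Lemma trans_odd s n j : trans alpha gamma s n (S (2 * j)) = 0.
Proof.
  unfold trans. replace (Nat.even (S (2 * j))) with false; [reflexivity|].
  now rewrite Nat.even_succ, Nat.odd_mul.
Qed.

Lemma trans_even s n j : trans alpha gamma s n (2 * j) =
  if (j <=? n)%nat then C n j * p s ^ j * (1 - p s) ^ (n - j) else 0.
Proof. unfold trans. now rewrite Nat.div2_double, Nat.even_mul. Qed.

Lemma trans_mean s n m : (n <= m)%nat ->
  sum_f_R0 (fun k => INR k * trans alpha gamma s n k) (2 * m) = 2 * INR n * p s.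
Proof.
  intro Hnm.
  set (B j := INR j * (C n j * p s ^ j * (1 - p s) ^ (n - j))).
  transitivity (sum_f_R0 (fun k => INR k * trans alpha gamma s n k) (S (2 * m))).
  { rewrite tech5, trans_odd. ring. }
  rewrite sum_f_R0_pairs.
  rewrite (sum_eq _ (fun j => (if (j <=? n)%nat then B j else 0) * 2)).
  2:{ intros j _. rewrite trans_odd, trans_even, mult_INR. unfold B.
      destruct (j <=? n)%nat; simpl (INR 2); ring. }
  rewrite <- scal_sum, (sum_f_R0_trunc _ n m Hnm).
  2:{ intros j Hj. now replace (j <=? n)%nat with false by (symmetry; apply Nat.leb_gt; lia). }
  rewrite (sum_eq _ B).
  2:{ intros j Hj. now replace (j <=? n)%nat with true by (symmetry; apply Nat.leb_le; lia). }
  unfold B. rewrite binomial_mean. ring.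
Qed.

Lemma alive_ge0 t k : 0 <= alive alpha gamma t k.
Proof.
  revert k; induction t as [|t IH]; intro k; simpl.
  - destruct (k =? 1)%nat; lra.
  - destruct (k =? 0)%nat; [lra|]. apply cond_pos_sum. intro n.
    apply Rmult_le_pos; [apply IH | apply trans_ge0].
Qed.

Lemma alive_0 t : alive alpha gamma t 0 = 0.
Proof. now destruct t. Qed.

Definition mean_size t := sum_f_R0 (fun k => INR k * alive alpha gamma t k) (2 ^ t).

Lemma mean_size_succ s : mean_size (S s) = 2 * p s * mean_size s.
Proof.
  unfold mean_size.
  rewrite (sum_eq _ (fun k => sum_f_R0
    (fun n => alive alpha gamma s n * (INR k * trans alpha gamma s n k)) (2 ^ s))).
  2:{ intros [|k] _.
      - rewrite (sum_eq _ (fun _ => 0)) by (intros; simpl; ring).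
        rewrite sum_cte. simpl. ring.
      - simpl alive. rewrite scal_sum. apply sum_eq. intros. ring. }
  rewrite sum_f_R0_swap, scal_sum. apply sum_eq. intros n Hn.
  rewrite (sum_eq _ (fun k => INR k * trans alpha gamma s n k * alive alpha gamma s n))
    by (intros; ring).
  rewrite <- scal_sum.
  replace (2 ^ S s)%nat with (2 * 2 ^ s)%nat by reflexivity.
  rewrite trans_mean by exact Hn. ring.
Qed.

Lemma mean_size_closed t :
  mean_size t = (2 * alpha) ^ t / Rpower (INR (fact t)) gamma.
Proof.
  induction t as [|t IH].
  - unfold mean_size. simpl sum_f_R0. change (INR (fact 0)) with 1.
    unfold Rpower. rewrite ln_1, (Rmult_0_r gamma), exp_0. simpl. field.
  - rewrite mean_size_succ, IH. unfold p, split_prob.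
    rewrite fact_simpl, mult_INR, <- Rpower_mult_distr, S_INR, (Rplus_comm (INR t))
      by (apply INR_fact_lt_0 || (apply lt_0_INR; lia)).
    assert (0 < Rpower (1 + INR t) gamma) by apply exp_pos.
    assert (0 < Rpower (INR (fact t)) gamma) by apply exp_pos.
    simpl pow. field. lra.
Qed.

Lemma surv_prob_le_mean_size t : surv_prob alpha gamma t <= mean_size t.
Proof.
  unfold surv_prob, mean_size. apply sum_Rle. intros [|k] _.
  - rewrite alive_0. simpl. lra.
  - pose proof (alive_ge0 t (S k)). rewrite S_INR.
    pose proof (pos_INR k). nra.
Qed.

End Process.

Lemma exp_pow x n : exp x ^ n = exp (INR n * x).
Proof.
  rewrite <- Rpower_pow by apply exp_pos. unfold Rpower. now rewrite ln_exp.
Qed.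

(* [(1 + 1/t)^t <= e], cleared of denominators. *)
Lemma succ_pow_le_exp_mul_pow t : (INR t + 1) ^ t <= exp 1 * INR t ^ t.
Proof.
  destruct t as [|t]; [simpl; pose proof (exp_ineq1_le 1); lra|].
  set (x := INR (S t)). assert (Hx : 0 < x) by (apply lt_0_INR; lia).
  replace (x + 1) with (x * (1 + / x)) by (field; lra).
  rewrite Rpow_mult_distr, (Rmult_comm (exp 1)).
  apply Rmult_le_compat_l; [apply pow_le; lra|].
  apply Rle_trans with (exp (/ x) ^ S t).
  - apply pow_incr. split; [pose proof (Rinv_0_lt_compat x Hx); lra|].
    apply exp_ineq1_le.
  - rewrite exp_pow. fold x. replace (x * / x) with 1 by (field; lra). lra.
Qed.

Lemma pow_le_fact_mul_exp t : INR t ^ t <= INR (fact t) * exp (INR t).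
Proof.
  induction t as [|t IH]; [simpl; rewrite exp_0; lra|].
  rewrite fact_simpl, mult_INR, S_INR, exp_plus. simpl pow.
  pose proof (succ_pow_le_exp_mul_pow t). pose proof (pos_INR t).
  pose proof (exp_pos 1).
  apply Rle_trans with ((INR t + 1) * (exp 1 * INR t ^ t)).
  - apply Rmult_le_compat_l; lra.
  - replace ((INR t + 1) * INR (fact t) * (exp (INR t) * exp 1))
      with ((INR t + 1) * (exp 1 * (INR (fact t) * exp (INR t)))) by ring.
    apply Rmult_le_compat_l; [lra|]. apply Rmult_le_compat_l; lra.
Qed.

Lemma Rpower_fact_lower t g : (1 <= t)%nat -> 0 <= g ->
  Rpower (INR t / exp 1) (g * INR t) <= Rpower (INR (fact t)) g.
Proof.
  intros Ht Hg. assert (Htpos : 0 < INR t) by (apply lt_0_INR; lia).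
  assert (Hbase : 0 < INR t / exp 1) by (apply Rdiv_lt_0_compat; [lra | apply exp_pos]).
  rewrite Rmult_comm, <- Rpower_mult, Rpower_pow by exact Hbase.
  apply Rle_Rpower_l; [exact Hg|]. split; [now apply pow_lt|].
  unfold Rdiv. rewrite Rpow_mult_distr, pow_inv, exp_pow, Rmult_1_r.
  apply (Rmult_le_reg_r (exp (INR t))); [apply exp_pos|].
  rewrite Rmult_assoc, Rinv_l by (apply Rgt_not_eq, exp_pos).
  rewrite Rmult_1_r. apply pow_le_fact_mul_exp.
Qed.

Lemma Rpower_rate x g c : 0 < x -> 0 < c ->
  Rpower (Rpower x g / (c * exp g)) (- x) = Rpower c x / Rpower (x / exp 1) (g * x).
Proof.
  intros Hx Hc. pose proof (exp_pos g). pose proof (exp_pos 1).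
  unfold Rdiv at 2. rewrite <- Rpower_Ropp. unfold Rpower, Rdiv.
  rewrite <- exp_plus. f_equal.
  rewrite !ln_mult, !ln_Rinv, !ln_mult, !ln_exp;
    try apply Rinv_0_lt_compat; try apply Rmult_lt_0_compat; try apply exp_pos; auto.
  ring.
Qed.

Theorem corollary1 (alpha gamma : R) (Ha : 0 < alpha < 1) (Hg : 0 < gamma) :
  exists C0 : R, 0 < C0 /\
    forall t : nat, (1 <= t)%nat ->
      surv_prob alpha gamma t <
        C0 * Rpower (Rpower (INR t) gamma / (2 * alpha * exp gamma)) (- INR t).
Proof.
  exists 2. split; [lra|]. intros t Ht.
  assert (Htpos : 0 < INR t) by (apply lt_0_INR; lia).
  rewrite Rpower_rate, Rpower_pow by lra.
  pose proof (Rpower_fact_lower t gamma Ht ltac:(lra)) as Hfact.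
  assert (Hrate_pos : 0 < Rpower (INR t / exp 1) (gamma * INR t)) by apply exp_pos.
  assert (Hpow_pos : 0 < (2 * alpha) ^ t) by (apply pow_lt; lra).
  assert (Hsurv : surv_prob alpha gamma t <= (2 * alpha) ^ t / Rpower (INR (fact t)) gamma).
  { rewrite <- mean_size_closed. now apply surv_prob_le_mean_size. }
  assert (Hmono : (2 * alpha) ^ t / Rpower (INR (fact t)) gamma
                  <= (2 * alpha) ^ t / Rpower (INR t / exp 1) (gamma * INR t)).
  { apply Rmult_le_compat_l; [lra|]. now apply Rinv_le_contravar. }
  assert (0 < (2 * alpha) ^ t / Rpower (INR t / exp 1) (gamma * INR t))
    by (apply Rdiv_lt_0_compat; assumption).
  lra.
Qed.
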